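(* Let $G$ be a connected graph with $n$ vertices. (a) If $n=12$, then $\frac{q(G)}{R(G)}\le \frac{11}{3}$, with equality if and only if $G=K_{12}$. (b) If $n\ge 13$, then $\frac{q(G)}{R(G)}\le \frac{n}{\sqrt{n-1}}$, with equality if and only if $G=S_n$.
   Context: All graphs are finite and simple. For a graph $G$ and a vertex $u$, $d(u)$ denotes the degree of $u$. The Randić index is $R(G)=\sum_{\{u,v\}\in E(G)} \frac{1}{\sqrt{d(u)d(v)}}$. The signless Laplacian matrix of $G$ is $Q=D+A$, where $D$ is the diagonal matrix of vertex degrees and $A$ is the adjacency matrix; $q(G)$ denotes the largest eigenvalue of $Q$. $K_n$ is the complete graph and $S_n$ the star on $n$ vertices. *)

(* Graphs on vertex set 'I_n given by a symmetric irreflexive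
   boolean relation; real numbers modelled by an arbitrary real closed field. *)
From HB Require Import structures.
From mathcomp Require Import all_boot all_order all_algebra.
Set Implicit Arguments. Unset Strict Implicit. Unset Printing Implicit Defensive.
Import Order.TTheory GRing.Theory Num.Theory.
Local Open Scope ring_scope.

Definition simple_graph (n : nat) (e : rel 'I_n) : Prop :=
  symmetric e /\ irreflexive e.

Definition connected_graph (n : nat) (e : rel 'I_n) : Prop :=
  forall x y : 'I_n, connect e x y.

Definition deg (n : nat) (e : rel 'I_n) (u : 'I_n) : nat := #|[set v | e u v]|.

Definition randic (R : rcfType) (n : nat) (e : rel 'I_n) : R :=
  \sum_(u < n) \sum_(v < n | (u < v)%N && e u v)
     (Num.sqrt ((deg e u)%:R * (deg e v)%:R))^-1.

Definition signless_laplacian (R : rcfType) (n : nat) (e : rel 'I_n) : 'M[R]_n :=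
  \matrix_(i, j) ((if i == j then (deg e i)%:R else 0) + (e i j)%:R).

(* q is the largest eigenvalue of the (symmetric, hence real-spectrum) matrix M *)
Definition largest_eigenvalue (R : rcfType) (n : nat) (M : 'M[R]_n) (q : R) : Prop :=
  eigenvalue M q /\ forall mu : R, eigenvalue M mu -> mu <= q.

Definition is_complete (n : nat) (e : rel 'I_n) : Prop :=
  forall x y : 'I_n, x != y -> e x y.

(* G = S_n (up to isomorphism): some centre c adjacent exactly to all others *)
Definition is_star (n : nat) (e : rel 'I_n) : Prop :=
  exists c : 'I_n, forall x y : 'I_n,
    e x y = (x != y) && ((x == c) || (y == c)).

(* Reading the eigenvalue equation of [Q = D + A] at a
   vertex maximising [|x_u| / d_u] bounds every eigenvalue by [2m/(n-1) + n - 2],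
   where [2m] is the degree sum.  On the other side, for constants [c] and [l],
   [R(G) = c m + l n + sum_(uv in E) g(d_u, d_v)] with
   [g(x, y) = 1/sqrt(xy) - c - l (1/x + 1/y)].  The constants are tuned so that
   [C (c m + l n) = 2m/(n-1) + n - 2] for the claimed constant [C], and so that
   [g >= 0] on [[1, n-1]^2], vanishing only at [(11, 11)] when [n = 12] and only at
   [{1, n-1}] when [n >= 13].  Hence [q/R <= C], with equality iff every edge gap
   vanishes and [2m/(n-1) + n - 2] is an eigenvalue, which singles out [K_12],
   resp. [S_n]. *)

From HB Require Import structures.
From mathcomp Require Import all_boot all_order all_algebra.
From mathcomp Require Import ring lra.
Import Order.TTheory GRing.Theory Num.Theory.
Local Open Scope ring_scope.
Set Implicit Arguments. Unset Strict Implicit. Unset Printing Implicit Defensive.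

Section Degrees.
Variables (n : nat) (e : rel 'I_n).

Lemma deg_le_pred u : irreflexive e -> (deg e u <= n.-1)%N.
Proof.
move=> irr; rewrite -[n in n.-1]card_ord -(cardsC1 u).
apply/subset_leq_card/subsetP => v; rewrite !inE.
by apply: contraTneq => ->; rewrite irr.
Qed.

Lemma adj_of_deg_pred u : irreflexive e -> deg e u = n.-1 -> forall v, v != u -> e u v.
Proof.
move=> irr du v vu.
suff /setP/(_ v) : [set v | e u v] = [set~ u] by rewrite !inE vu.
apply/eqP; rewrite eqEcard cardsC1 card_ord -du leqnn andbT.
by apply/subsetP => w; rewrite !inE; apply: contraTneq => ->; rewrite irr.
Qed.

Lemma adj_of_deg1 u w : deg e u = 1%N -> e u w -> forall v, e u v -> v = w.
Proof.
move=> /eqP/cards1P [x hx] euw v euv.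
have : w \in [set v | e u v] by rewrite inE.
have : v \in [set v | e u v] by rewrite inE.
by rewrite hx !inE => /eqP -> /eqP ->.
Qed.

Lemma connected_deg_gt0 : connected_graph e -> (1 < n)%N -> forall u, (0 < deg e u)%N.
Proof.
move=> con n_gt1 u.
have [v vu] : exists v : 'I_n, v != u.
  have [-> | neq] := eqVneq u (Ordinal n_gt1); last by exists (Ordinal n_gt1); rewrite eq_sym.
  by exists (Ordinal (ltnW n_gt1)).
have /connectP [[|w p] /= Pp Lp] := con u v; first by rewrite Lp eqxx in vu.
by apply/card_gt0P; exists w; rewrite inE; case/andP: Pp.
Qed.

Lemma deg_complete : irreflexive e -> is_complete e -> forall u, deg e u = n.-1.
Proof.
move=> irr hc u; rewrite -[n in n.-1]card_ord -(cardsC1 u) /deg.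
congr #|pred_of_set _|; apply/setP => v; rewrite !inE.
have [-> | vu] := eqVneq v u; first by rewrite irr.
by rewrite hc // eq_sym.
Qed.

Lemma deg_star c : (forall x y, e x y = (x != y) && ((x == c) || (y == c))) ->
  deg e c = n.-1 /\ forall x, x != c -> deg e x = 1%N.
Proof.
move=> he; split.
  rewrite -[n in n.-1]card_ord -(cardsC1 c) /deg.
  by congr #|pred_of_set _|; apply/setP => v; rewrite !inE he eqxx andbT eq_sym.
move=> x xc; rewrite -(cards1 c) /deg.
congr #|pred_of_set _|; apply/setP => v; rewrite !inE he (negPf xc) /=.
by have [-> | vc] := eqVneq v c; rewrite ?andbT ?andbF.
Qed.

Lemma star_of_deg c : simple_graph e -> deg e c = n.-1 ->
  (forall x, x != c -> deg e x = 1%N) -> is_star e.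
Proof.
move=> [sym irr] dc dx; have adj_c := adj_of_deg_pred irr dc.
exists c => x y; have [-> | xc] := eqVneq x c.
  rewrite andbT; have [<- | cy] := eqVneq c y; first by rewrite irr.
  by rewrite adj_c // eq_sym.
have [-> | yc] := eqVneq y c; first by rewrite orbT andbT xc sym adj_c.
rewrite orFb andbF; apply/negbTE/negP => exy.
have exc : e x c by rewrite sym adj_c.
by move: yc; rewrite (adj_of_deg1 (dx x xc) exc exy) eqxx.
Qed.

Lemma sum_edges_eq0 (R : realDomainType) (f : 'I_n -> 'I_n -> R) :
  simple_graph e -> (forall u v, f u v = f v u) -> (forall u v, e u v -> 0 <= f u v) ->
  \sum_(u < n) \sum_(v < n | (u < v)%N && e u v) f u v = 0 ->
  forall u v, e u v -> f u v = 0.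
Proof.
move=> [sym irr] fsym f_ge0 sum0.
have inner_ge0 (u : 'I_n) : 0 <= \sum_(v < n | (u < v)%N && e u v) f u v.
  by apply: sumr_ge0 => v /andP [_ /f_ge0].
suff lt_case (u v : 'I_n) : (u < v)%N -> e u v -> f u v = 0.
  move=> u v euv; case: (ltngtP u v) => [uv | vu | /val_inj uv]; first exact: lt_case.
    by rewrite fsym lt_case // sym.
  by rewrite uv irr in euv.
move=> uv euv; have := @psumr_eq0P _ _ _ _ (fun u _ => inner_ge0 u) sum0 u isT.
by move/psumr_eq0P; apply; [move=> w /andP [_ /f_ge0] | rewrite uv euv].
Qed.

Lemma exists_adj u : (0 < deg e u)%N -> exists v, e u v.
Proof. by case/card_gt0P => v; rewrite inE; exists v. Qed.

Lemma star_of_edge_degrees :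
  simple_graph e -> (2 < n)%N -> (forall u, (0 < deg e u)%N) ->
  (forall u v, e u v ->
     (deg e u = 1%N /\ deg e v = n.-1) \/ (deg e u = n.-1 /\ deg e v = 1%N)) ->
  is_star e.
Proof.
move=> [sym irr] n_gt2 deg_gt0 edge_deg.
have [c dc] : exists c, deg e c = n.-1.
  pose u : 'I_n := Ordinal (ltnW (ltnW n_gt2)).
  have [w uw] := exists_adj (deg_gt0 u).
  by case: (edge_deg _ _ uw) => [[_ dw] | [du _]]; [exists w | exists u].
apply: (star_of_deg (conj sym irr) dc) => x xc.
have := edge_deg _ _ (adj_of_deg_pred irr dc xc).
by rewrite dc => -[[n1 _] | [_ //]]; move: n_gt2; rewrite -ltn_predRL n1.
Qed.

End Degrees.

Definition deg_sum (R : rcfType) (n : nat) (e : rel 'I_n) : R :=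
  \sum_(u < n) (deg e u)%:R.

Definition signless_bound (R : rcfType) (n : nat) (e : rel 'I_n) : R :=
  deg_sum R e / (n%:R - 1) + n%:R - 2.

Definition randic_gap (R : rcfType) (c l x y : R) : R :=
  (Num.sqrt (x * y))^-1 - c - l * (x^-1 + y^-1).

Lemma natr_pred (R : pzRingType) n : (0 < n)%N -> (n.-1)%:R = n%:R - 1 :> R.
Proof. by case: n => // n _; rewrite /= -[n.+1]addn1 natrD addrK. Qed.

(* [mu <= d + S/d <= d + min(N, (D - N)/d)], and on [1 <= d <= N] the right-hand
   side is largest at [d = N]. *)
Lemma le_degree_step_bound (R : realFieldType) (mu d S D N : R) :
  1 <= d -> d <= N -> (mu - d) * d <= S -> S <= d * N -> S <= D - N ->
  mu <= D / N + N - 1.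
Proof.
move=> d_ge1 d_leN step S_le_dN S_le_DN.
have N_gt0 : 0 < N by lra.
have mu_d : mu * d <= d * d + S by nra.
have key : d * d * N + S * N <= (D - N) * d + N * N * d.
  have [dN_le | DN_lt] := lerP (d * N) (D - N).
    have : S * N <= d * N * N by nra.
    nra.
  have : S * N <= (D - N) * N by nra.
  have : (d - N) * (d * N - (D - N)) <= 0 by nra.
  nra.
have muN : mu * N <= D - N + N * N.
  rewrite -(ler_pM2r (_ : 0 < d)); last by lra.
  nra.
rewrite (_ : D / N + N - 1 = (D - N + N * N) / N); last by field; rewrite gt_eqF.
by rewrite ler_pdivlMr.
Qed.

Lemma randic_gapC (R : rcfType) (c l x y : R) : randic_gap c l x y = randic_gap c l y x.
Proof. by rewrite /randic_gap mulrC [y^-1 + _]addrC. Qed.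

Section SignlessLaplacian.
Variables (R : rcfType) (n : nat) (e : rel 'I_n).
Hypotheses (e_simple : simple_graph e) (deg_gt0 : forall u, (0 < deg e u)%N).

Local Notation d u := ((deg e u)%:R : R).
Local Notation Q := (signless_laplacian R e).

Lemma sum_adj_const u (K : R) : \sum_(v | e u v) K = d u * K.
Proof.
rewrite (eq_bigl (fun v => v \in [set v | e u v])); last by move=> v; rewrite inE.
by rewrite sumr_const mulr_natl.
Qed.

Lemma deg_lerR u : d u <= n%:R - 1.
Proof.
have n_gt0 : (0 < n)%N by case: n u => [[]|].
by rewrite -natr_pred // ler_nat deg_le_pred //; case: e_simple.
Qed.

Lemma deg_ge1R u : 1 <= d u.
Proof. by rewrite ler1n. Qed.

Lemma deg_gt0R u : 0 < d u.
Proof. by rewrite ltr0n. Qed.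

Lemma sum_edges (h : 'I_n -> 'I_n -> R) :
  \sum_(u < n) \sum_(v < n | (u < v)%N && e u v) (h u v + h v u) =
  \sum_(u < n) \sum_(v < n | e u v) h u v.
Proof.
have [sym irr] := e_simple.
pose F (u v : 'I_n) (x : R) := if (u < v)%N && e u v then x else 0.
transitivity (\sum_(u < n) \sum_(v < n) F u v (h u v) +
              \sum_(u < n) \sum_(v < n) F u v (h v u)).
  rewrite -big_split; apply: eq_bigr => u _; rewrite -big_split big_mkcond.
  by apply: eq_bigr => v _; rewrite /F /=; case: (_ && _); rewrite ?addr0.
rewrite [X in _ + X]exchange_big -big_split; apply: eq_bigr => u _.
rewrite -big_split [RHS]big_mkcond; apply: eq_bigr => v _; rewrite /F (sym v u).
case: (ltngtP u v) => [uv | vu | /val_inj ->] /=; rewrite ?addr0 ?add0r //.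
by rewrite irr.
Qed.

Lemma signless_laplacian_row (x : 'rV[R]_n) i :
  (x *m Q) 0 i = x 0 i * d i + \sum_(j | e i j) x 0 j.
Proof.
have [sym _] := e_simple.
rewrite mxE; under eq_bigr do rewrite mxE mulrDr.
rewrite big_split /= (bigD1 i) //= eqxx big1 ?addr0 => [|j /negPf ->]; last by rewrite mulr0.
congr (_ + _); rewrite [RHS]big_mkcond; apply: eq_bigr => j _ /=.
by rewrite (sym j i); case: (e i j); rewrite ?mulr1 ?mulr0.
Qed.

(* [(mu - d_i) x_i] is the sum of the [x_j] over the neighbours [j] of [i], and
   [|x_j| <= |x_i| d_j / d_i] by the choice of [i]. *)
Lemma eigenvector_step (x : 'rV[R]_n) mu i :
  x *m Q = mu *: x -> x 0 i != 0 ->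
  (forall j, `|x 0 j| / d j <= `|x 0 i| / d i) ->
  (mu - d i) * d i <= \sum_(j | e i j) d j.
Proof.
move=> eig_x xi_neq0 i_max; set a := `|x 0 i|; set S := \sum_(j | e i j) d j.
have a_gt0 : 0 < a by rewrite normr_gt0.
have adj_sum : \sum_(j | e i j) x 0 j = (mu - d i) * x 0 i.
  have := congr1 (fun y : 'rV_n => y 0 i) eig_x.
  by rewrite /= signless_laplacian_row mxE mulrBl => <-; ring.
have step : (mu - d i) * a <= a / d i * S.
  rewrite (le_trans (ler_norm _)) // normrM /a normr_id -normrM -adj_sum.
  rewrite (le_trans (ler_norm_sum _ _ _)) // /S mulr_sumr ler_sum // => j _.
  by rewrite -ler_pdivrMr ?deg_gt0R.
rewrite -(ler_pM2r a_gt0) mulrAC.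
apply: (le_trans (ler_wpM2r (ltW (deg_gt0R i)) step)).
by rewrite le_eqVlt; apply/orP; left; apply/eqP; field; rewrite gt_eqF ?deg_gt0R.
Qed.

Lemma eigenvalue_step mu : eigenvalue Q mu ->
  exists i, (mu - d i) * d i <= \sum_(j | e i j) d j.
Proof.
move=> /eigenvalueP [x eig_x x_neq0].
have [j0 xj0] : exists j, x 0 j != 0.
  apply/existsP; apply: contraNT x_neq0 => /existsPn x0.
  by apply/eqP/rowP => j; rewrite mxE; apply/eqP/negbNE/x0.
have [i _ i_max] := @arg_maxP _ _ 'I_n j0 xpredT (fun j => `|x 0 j| / d j) isT.
exists i; apply: eigenvector_step eig_x _ (fun j => i_max j isT).
have : 0 < `|x 0 j0| / d j0 by rewrite divr_gt0 ?normr_gt0 ?deg_gt0R.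
move=> /lt_le_trans /(_ (i_max j0 isT)).
by rewrite pmulr_lgt0 ?invr_gt0 ?deg_gt0R // normr_gt0.
Qed.

Lemma sum_adj_deg_le_mul i : \sum_(j | e i j) d j <= d i * (n%:R - 1).
Proof. by rewrite -sum_adj_const ler_sum // => j _; apply: deg_lerR. Qed.

(* The non-neighbours of [i] include [i] itself and have degree at least [1]. *)
Lemma sum_adj_deg_le_sub i : \sum_(j | e i j) d j <= deg_sum R e - (n%:R - 1).
Proof.
have [_ irr] := e_simple.
have non_adj : \sum_(j | ~~ e i j) (1 : R) = n%:R - d i.
  have := sumr_const 'I_n (1 : R); rewrite card_ord (bigID (e i)) /=.
  by rewrite sum_adj_const mulr1 => <-; rewrite addrC addrK.
have excess : d i - 1 <= \sum_(j | ~~ e i j) (d j - 1).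
  rewrite (bigD1 i) ?irr //= lerDl sumr_ge0 // => j _.
  by rewrite subr_ge0 deg_ge1R.
rewrite /deg_sum [X in _ <= X - _](bigID (e i)) /=.
move: excess; rewrite sumrB non_adj; lra.
Qed.

Lemma eigenvalue_le_signless_bound mu : eigenvalue Q mu -> mu <= signless_bound R e.
Proof.
move=> /eigenvalue_step [i step].
apply: le_trans (le_degree_step_bound (deg_ge1R i) (deg_lerR i) step
  (sum_adj_deg_le_mul i) (sum_adj_deg_le_sub i)) _.
rewrite /signless_bound; lra.
Qed.

Lemma sum_edges_linear (c l : R) :
  \sum_(u < n) \sum_(v < n | (u < v)%N && e u v) (c + l * ((d u)^-1 + (d v)^-1)) =
  c * deg_sum R e / 2 + l * n%:R.
Proof.
have d_neq0 u : d u != 0 by rewrite gt_eqF ?deg_gt0R.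
transitivity (\sum_(u < n) \sum_(v < n | (u < v)%N && e u v)
                ((c / 2 + l / d u) + (c / 2 + l / d v))).
  by apply: eq_bigr => u _; apply: eq_bigr => v _; field; rewrite !d_neq0.
rewrite sum_edges; transitivity (\sum_(u < n) (c / 2 * d u + l)).
  by apply: eq_bigr => u _; rewrite sum_adj_const; field.
by rewrite big_split /= -mulr_sumr sumr_const card_ord mulr_natr /deg_sum mulrAC.
Qed.

Lemma randic_decomp (c l : R) :
  randic R e = c * deg_sum R e / 2 + l * n%:R
    + \sum_(u < n) \sum_(v < n | (u < v)%N && e u v) randic_gap c l (d u) (d v).
Proof.
rewrite /randic -sum_edges_linear -big_split; apply: eq_bigr => u _ /=.
by rewrite -big_split; apply: eq_bigr => v _; rewrite /randic_gap /=; ring.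
Qed.

Lemma randic_ratio_bound (q c l C : R) :
  largest_eigenvalue Q q ->
  (forall u v, e u v -> 0 <= randic_gap c l (d u) (d v)) ->
  0 < C -> 0 < c * deg_sum R e / 2 + l * n%:R ->
  C * (c * deg_sum R e / 2 + l * n%:R) = signless_bound R e ->
  q / randic R e <= C /\
  (q / randic R e = C <->
     (forall u v, e u v -> randic_gap c l (d u) (d v) = 0) /\
     eigenvalue Q (signless_bound R e)).
Proof.
move=> [q_eig q_max] gap_ge0 C_gt0; set L := c * _ / 2 + _ => L_gt0 CL.
have := randic_decomp c l; rewrite -/L; set G := \sum_(u < n) _ => randicE.
have G_ge0 : 0 <= G by apply: sumr_ge0 => u _; apply: sumr_ge0 => v /andP [_ /gap_ge0].
have q_le := eigenvalue_le_signless_bound q_eig; rewrite -CL in q_le.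
have LG_gt0 : 0 < L + G by lra.
rewrite randicE ler_pdivrMr //; split; first by nra.
split=> [ratio | [gap0 bound_eig]].
  have q_eq : q = C * (L + G) by rewrite -ratio divfK ?gt_eqF.
  have G0 : G = 0 by nra.
  split; last by rewrite -CL (_ : C * L = q) //; nra.
  exact: sum_edges_eq0 e_simple (fun u v => randic_gapC _ _ _ _) gap_ge0 G0.
have G0 : G = 0 by apply: big1 => u _; apply: big1 => v /andP [_ /gap0].
have := q_max _ bound_eig; rewrite -CL G0 addr0 => q_ge.
have -> : q = C * L by apply/eqP; rewrite eq_le q_le q_ge.
by rewrite mulfK ?gt_eqF.
Qed.

Lemma regular_eigenvalue r : (0 < n)%N -> (forall u, deg e u = r) ->
  eigenvalue Q (2 * r%:R).
Proof.
move=> n_gt0 reg; apply/eigenvalueP; exists (const_mx 1).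
  apply/rowP => i; rewrite signless_laplacian_row !mxE.
  under eq_bigr do rewrite mxE.
  by rewrite sum_adj_const !reg; ring.
by apply/negP => /eqP/rowP/(_ (Ordinal n_gt0)); rewrite !mxE; apply/eqP; rewrite oner_eq0.
Qed.

Lemma regular_deg_sum r : (forall u, deg e u = r) -> deg_sum R e = n%:R * r%:R.
Proof.
move=> reg; rewrite /deg_sum; under eq_bigr do rewrite reg.
by rewrite sumr_const card_ord mulr_natl.
Qed.

Lemma star_eigenvalue : is_star e -> eigenvalue Q n%:R.
Proof.
move=> [c star]; have [dc dx] := deg_star star.
have n_gt0 : (0 < n)%N by case: n c {star dc dx} => [[]|].
apply/eigenvalueP; exists (\row_j (if j == c then n%:R - 1 else 1)).
  apply/rowP => i; rewrite signless_laplacian_row !mxE.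
  under eq_bigr do rewrite mxE.
  have [-> | ic] := eqVneq i c.
    rewrite (eq_bigr (fun _ => 1)) => [|j]; last by rewrite star eqxx andbT eq_sym => /negPf ->.
    by rewrite sum_adj_const dc natr_pred //; ring.
  rewrite dx // (eq_bigl (pred1 c)) => [|j]; last first.
    by rewrite star (negPf ic) /=; have [->|] := eqVneq j c; rewrite ?andbT ?andbF // eq_sym.
  by rewrite big_pred1_eq eqxx; ring.
apply/negP => /eqP/rowP/(_ c); rewrite !mxE eqxx => /eqP; rewrite subr_eq0.
by rewrite -[1]/(1%:R) eqr_nat => /eqP n1; move: (deg_gt0 c); rewrite dc n1.
Qed.

Lemma star_deg_sum : is_star e -> deg_sum R e = 2 * (n%:R - 1).
Proof.
move=> [c star]; have [dc dx] := deg_star star.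
have n_gt0 : (0 < n)%N by case: n c {star dc dx} => [[]|].
rewrite /deg_sum (bigD1 c) //= dc natr_pred // (eq_bigr (fun _ => 1)) => [|j /dx -> //].
have := sumr_const 'I_n (1 : R); rewrite card_ord (bigD1 c) //= => ones.
lra.
Qed.

End SignlessLaplacian.

Lemma randic_gap_sign (R : rcfType) (a c l x y : R) (P : Prop) :
  1 <= x -> 1 <= y -> 0 < a ->
  0 <= a * Num.sqrt (x * y) - a * c * (x * y) - a * l * (x + y) ->
  (a * Num.sqrt (x * y) - a * c * (x * y) - a * l * (x + y) = 0 -> P) ->
  0 <= randic_gap c l x y /\ (randic_gap c l x y = 0 -> P).
Proof.
move=> x_ge1 y_ge1 a_gt0 num_ge0 num0; set t := Num.sqrt (x * y) in num_ge0 num0 *.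
have t2 : t ^+ 2 = x * y by rewrite sqr_sqrtr //; nra.
have t_gt0 : 0 < t by rewrite sqrtr_gt0; nra.
have den_gt0 : 0 < a * (x * y) by rewrite mulr_gt0 //; nra.
have -> : randic_gap c l x y =
    (a * t - a * c * (x * y) - a * l * (x + y)) / (a * (x * y)).
  rewrite /randic_gap -/t (_ : t^-1 = t / (x * y)); last by rewrite -t2; field; lra.
  by field; rewrite !gt_eqF //; nra.
split; first by rewrite divr_ge0 // ltW.
by move/eqP; rewrite mulf_eq0 invr_eq0 (gt_eqF den_gt0) orbF => /eqP /num0.
Qed.

Lemma K12_gap_numerator (R : realFieldType) (x y t : R) :
  1 <= x <= 11 -> 1 <= y <= 11 -> 0 <= t -> t ^+ 2 = x * y ->
  0 <= 242 * t - 12 * (x * y) - 55 * (x + y) /\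
  (242 * t - 12 * (x * y) - 55 * (x + y) = 0 -> x = 11 /\ y = 11).
Proof.
move=> /andP [x1 x11] /andP [y1 y11] t_ge0 t2.
have t_ge1 : 1 <= t by nra.
have t_le11 : t <= 11 by nra.
have [t_small | t_large] := lerP t (10 / 3).
  have : 0 <= (t - 1) * (10 / 3 - t) by rewrite mulr_ge0 // subr_ge0.
  have : 0 <= (x - 1) * (y - 1) by rewrite mulr_ge0 // subr_ge0.
  split=> [|N0]; [nra | exfalso; nra].
have : 0 <= (11 - x) * (11 - y) by rewrite mulr_ge0 // subr_ge0.
have : 0 <= (11 - t) * (17 * t - 55) by rewrite mulr_ge0 // subr_ge0 //; lra.
split=> [|N0]; first by nra.
have t11 : t = 11.
  have : (11 - t) * (17 * t - 55) = 0 by nra.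
  by move/eqP; rewrite mulf_eq0 => /orP [] /eqP; lra.
have : (11 - x) * (11 - y) = 0 by nra.
by move/eqP; rewrite mulf_eq0 => /orP [] /eqP => h; split; nra.
Qed.

Lemma K12_gap (R : rcfType) (x y : R) : 1 <= x <= 11 -> 1 <= y <= 11 ->
  0 <= randic_gap (6 / 121) (5 / 22) x y /\
  (randic_gap (6 / 121) (5 / 22) x y = 0 -> x = 11 /\ y = 11).
Proof.
move=> x_range y_range; move: (x_range) (y_range) => /andP [x_ge1 _] /andP [y_ge1 _].
have t2 : Num.sqrt (x * y) ^+ 2 = x * y by rewrite sqr_sqrtr // mulr_ge0 //; lra.
have [N_ge0 N0] := K12_gap_numerator x_range y_range (sqrtr_ge0 _) t2.
have c_eq : 242 * (6 / 121) = 12 :> R by field.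
have l_eq : 242 * (5 / 22) = 55 :> R by field.
apply: (randic_gap_sign x_ge1 y_ge1 (_ : 0 < 242)).
- by [].
- by rewrite c_eq l_eq.
- by rewrite c_eq l_eq.
Qed.

Lemma K12_gap_eq0 (R : rcfType) : randic_gap (6 / 121) (5 / 22) 11 11 = 0 :> R.
Proof. by rewrite /randic_gap -expr2 sqrtr_sqr ger0_norm //; field. Qed.

Lemma star_gap_numerator_small (R : realFieldType) (n k x y t : R) :
  0 <= k -> n = k ^+ 2 + 1 -> 12 <= k ^+ 2 -> 1 <= x -> 1 <= y ->
  0 <= t -> t ^+ 2 = x * y -> t <= k ->
  0 <= n ^+ 2 * k * t - 2 * n * (x * y) - k ^+ 2 * (n - 2) * (x + y) /\
  (n ^+ 2 * k * t - 2 * n * (x * y) - k ^+ 2 * (n - 2) * (x + y) = 0 ->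
   t = k /\ (x = 1 \/ y = 1)).
Proof.
move=> k_ge0 nk k2 x_ge1 y_ge1 t_ge0 t2 t_le_k.
have xy_ge0 : 0 <= (x - 1) * (y - 1) by rewrite mulr_ge0 // subr_ge0.
have t_ge1 : 1 <= t.
  have : 1 <= t * t by rewrite -expr2 t2; nra.
  nra.
set A := (2 * n + k ^+ 2 * (n - 2)) * (t + k) - n ^+ 2 * k.
have A_gt0 : 0 < A.
  have -> : A = (k ^+ 4 + k ^+ 2 + 2) * (t - 1) + (k ^+ 3 * (k - 1) + k ^+ 2 + k + 2).
    by rewrite /A nk; ring.
  have k_ge3 : 3 <= k.
    have : 12 <= k * k by rewrite -expr2.
    nra.
  have : 0 <= k ^+ 3 * (k - 1) by rewrite mulr_ge0 ?exprn_ge0 //; lra.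
  have : 0 <= (k ^+ 4 + k ^+ 2 + 2) * (t - 1).
    by rewrite mulr_ge0 ?subr_ge0 // !addr_ge0 ?exprn_ge0.
  have := exprn_ge0 2 k_ge0; lra.
have -> : n ^+ 2 * k * t - 2 * n * (x * y) - k ^+ 2 * (n - 2) * (x + y) =
          (k - t) * A + k ^+ 2 * (n - 2) * ((x - 1) * (y - 1))
          + (2 * n + k ^+ 2 * (n - 2)) * (t ^+ 2 - x * y).
  by rewrite /A nk; ring.
rewrite t2 subrr mulr0 addr0.
have lhs_ge0 : 0 <= (k - t) * A by apply: mulr_ge0; [rewrite subr_ge0 | exact: ltW].
have rhs_ge0 : 0 <= k ^+ 2 * (n - 2) * ((x - 1) * (y - 1)).
  by rewrite !mulr_ge0 ?exprn_ge0 //; lra.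
split=> [|N0]; first by lra.
split.
  have : (k - t) * A = 0 by lra.
  by move/eqP; rewrite mulf_eq0 (gt_eqF A_gt0) orbF subr_eq0 => /eqP.
have coef_gt0 : 0 < k ^+ 2 * (n - 2) by rewrite mulr_gt0 //; lra.
have : (x - 1) * (y - 1) = 0.
  have : k ^+ 2 * (n - 2) * ((x - 1) * (y - 1)) = 0 by lra.
  by move/eqP; rewrite mulf_eq0 (gt_eqF coef_gt0) => /eqP.
by move/eqP; rewrite mulf_eq0 !subr_eq0 => /orP [] /eqP; [left | right].
Qed.

Lemma star_gap_numerator_large (R : realFieldType) (n k x y t : R) :
  0 <= k -> n = k ^+ 2 + 1 -> 12 <= k ^+ 2 -> 1 <= x <= n - 1 -> 1 <= y <= n - 1 ->
  0 <= t -> t ^+ 2 = x * y -> k <= t ->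
  0 <= n ^+ 2 * k * t - 2 * n * (x * y) - k ^+ 2 * (n - 2) * (x + y) /\
  (n ^+ 2 * k * t - 2 * n * (x * y) - k ^+ 2 * (n - 2) * (x + y) = 0 ->
   t = k /\ (x = n - 1 \/ y = n - 1)).
Proof.
move=> k_ge0 nk k2 /andP [x_ge1 x_le] /andP [y_ge1 y_le] t_ge0 t2 k_le_t.
have xy_ge0 : 0 <= (k ^+ 2 - x) * (k ^+ 2 - y) by rewrite mulr_ge0 // subr_ge0; lra.
have t_le : t <= k ^+ 2.
  have : 0 <= (k ^+ 2 - x) * y by rewrite mulr_ge0 ?subr_ge0; lra.
  have : 0 <= k ^+ 2 * (k ^+ 2 - y) by rewrite mulr_ge0 ?subr_ge0; lra.
  have : t * t <= k ^+ 2 * k ^+ 2 by rewrite -[t * t]expr2 t2; nra.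
  nra.
set A := k ^+ 3 * (n - 2) - (3 * n - 2) * t.
(* [k^3 - 3k^2 - k - 1 > 0] needs [k > 3.38]: this is where [n >= 13] is used. *)
have cubic_gt0 : 0 < k ^+ 3 - 3 * k ^+ 2 - k - 1.
  have s_ge0 : 0 <= k - 173 / 50.
    have : 12 <= k * k by rewrite -expr2.
    nra.
  have := mulr_ge0 s_ge0 s_ge0; have := mulr_ge0 (mulr_ge0 s_ge0 s_ge0) s_ge0.
  rewrite !exprS expr0 !mulr1; lra.
have A_gt0 : 0 < A.
  have : 0 < k ^+ 2 * (k ^+ 3 - 3 * k ^+ 2 - k - 1) by rewrite mulr_gt0 //; lra.
  have : 0 <= (3 * n - 2) * (k ^+ 2 - t) by rewrite mulr_ge0 ?subr_ge0 //; lra.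
  rewrite /A nk; lra.
have -> : n ^+ 2 * k * t - 2 * n * (x * y) - k ^+ 2 * (n - 2) * (x + y) =
          (t - k) * A + (n - 2) * ((k ^+ 2 - x) * (k ^+ 2 - y))
          + (3 * n - 2) * (t ^+ 2 - x * y).
  by rewrite /A nk; ring.
rewrite t2 subrr mulr0 addr0.
have lhs_ge0 : 0 <= (t - k) * A by apply: mulr_ge0; [rewrite subr_ge0 | exact: ltW].
have rhs_ge0 : 0 <= (n - 2) * ((k ^+ 2 - x) * (k ^+ 2 - y)) by rewrite mulr_ge0 //; lra.
split=> [|N0]; first by lra.
split.
  have : (t - k) * A = 0 by lra.
  by move/eqP; rewrite mulf_eq0 (gt_eqF A_gt0) orbF subr_eq0 => /eqP.
have : (k ^+ 2 - x) * (k ^+ 2 - y) = 0.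
  have : (n - 2) * ((k ^+ 2 - x) * (k ^+ 2 - y)) = 0 by lra.
  by move/eqP; rewrite mulf_eq0 => /orP [/eqP | /eqP //]; lra.
by move/eqP; rewrite mulf_eq0 !subr_eq0 => /orP [] /eqP; [left | right]; lra.
Qed.

Lemma star_gap_numerator (R : realFieldType) (n k x y t : R) :
  0 <= k -> n = k ^+ 2 + 1 -> 12 <= k ^+ 2 -> 1 <= x <= n - 1 -> 1 <= y <= n - 1 ->
  0 <= t -> t ^+ 2 = x * y ->
  0 <= n ^+ 2 * k * t - 2 * n * (x * y) - k ^+ 2 * (n - 2) * (x + y) /\
  (n ^+ 2 * k * t - 2 * n * (x * y) - k ^+ 2 * (n - 2) * (x + y) = 0 ->
   (x = 1 /\ y = n - 1) \/ (x = n - 1 /\ y = 1)).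
Proof.
move=> k_ge0 nk k2 x_range y_range t_ge0 t2.
have k2n : k ^+ 2 = n - 1 by rewrite nk; ring.
move: (x_range) (y_range) => /andP [x_ge1 _] /andP [y_ge1 _].
have [t_le_k | k_lt_t] := lerP t k.
  have [N_ge0 N0] := star_gap_numerator_small k_ge0 nk k2 x_ge1 y_ge1 t_ge0 t2 t_le_k.
  split=> // /N0 [tk [x1 | y1]]; move: t2; rewrite tk k2n.
    by rewrite x1 mul1r => <-; left.
  by rewrite y1 mulr1 => <-; right.
have [N_ge0 N0] := star_gap_numerator_large k_ge0 nk k2 x_range y_range t_ge0 t2 (ltW k_lt_t).
have n1_neq0 : n - 1 != 0 by rewrite gt_eqF //; lra.
split=> // /N0 [tk [xn | yn]]; move: t2; rewrite tk k2n.
  by rewrite xn -{1}[n - 1]mulr1 => /(mulfI n1_neq0) <-; right.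
by rewrite yn -{1}[n - 1]mul1r => /(mulIf n1_neq0) <-; left.
Qed.

Lemma star_gap (R : rcfType) (n k x y : R) :
  13 <= n -> 0 < k -> k ^+ 2 = n - 1 -> 1 <= x <= n - 1 -> 1 <= y <= n - 1 ->
  0 <= randic_gap (2 / (n * k)) (k * (n - 2) / n ^+ 2) x y /\
  (randic_gap (2 / (n * k)) (k * (n - 2) / n ^+ 2) x y = 0 ->
   (x = 1 /\ y = n - 1) \/ (x = n - 1 /\ y = 1)).
Proof.
move=> n_ge13 k_gt0 k2 x_range y_range.
have nk : n = k ^+ 2 + 1 by rewrite k2; ring.
have k2_ge : 12 <= k ^+ 2 by lra.
have n_gt0 : 0 < n by lra.
have x_ge1 : 1 <= x by case/andP: x_range.
have y_ge1 : 1 <= y by case/andP: y_range.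
have t2 : Num.sqrt (x * y) ^+ 2 = x * y by rewrite sqr_sqrtr // mulr_ge0 //; lra.
have [N_ge0 N0] := star_gap_numerator (ltW k_gt0) nk k2_ge x_range y_range (sqrtr_ge0 _) t2.
have c_eq : n ^+ 2 * k * (2 / (n * k)) = 2 * n by field; rewrite !gt_eqF.
have l_eq : n ^+ 2 * k * (k * (n - 2) / n ^+ 2) = k ^+ 2 * (n - 2) by field; rewrite gt_eqF.
apply: (randic_gap_sign x_ge1 y_ge1 (_ : 0 < n ^+ 2 * k)).
- by rewrite mulr_gt0 ?exprn_gt0.
- by rewrite c_eq l_eq.
- by rewrite c_eq l_eq.
Qed.

Lemma star_gap_eq0 (R : rcfType) (n k : R) :
  0 < k -> k ^+ 2 = n - 1 -> 0 < n ->
  randic_gap (2 / (n * k)) (k * (n - 2) / n ^+ 2) (n - 1) 1 = 0.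
Proof.
move=> k_gt0 k2 n_gt0; rewrite /randic_gap mulr1 -k2 sqrtr_sqr ger0_norm ?ltW //.
have nk : n = k ^+ 2 + 1 by rewrite k2; ring.
by rewrite nk; field; rewrite -nk !gt_eqF ?exprn_gt0.
Qed.

Lemma star_weights (R : realFieldType) (n k D : R) :
  13 <= n -> 0 < k -> k ^+ 2 = n - 1 -> 0 <= D ->
  0 < 2 / (n * k) * D / 2 + k * (n - 2) / n ^+ 2 * n /\
  n / k * (2 / (n * k) * D / 2 + k * (n - 2) / n ^+ 2 * n) = D / (n - 1) + n - 2.
Proof.
move=> n_ge13 k_gt0 k2 D_ge0; split; last by rewrite -k2; field; rewrite !gt_eqF //; lra.
have c_ge0 : 0 <= 2 / (n * k) by rewrite divr_ge0 // mulr_ge0 //; lra.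
have : 0 < k * (n - 2) / n ^+ 2 * n by rewrite !mulr_gt0 ?invr_gt0 ?exprn_gt0 //; lra.
have := mulr_ge0 c_ge0 D_ge0; lra.
Qed.

Lemma ratio_bound_order12 (R : rcfType) (e : rel 'I_12) (q : R) :
  simple_graph e -> connected_graph e ->
  largest_eigenvalue (signless_laplacian R e) q ->
  q / randic R e <= 11%:R / 3%:R /\ (q / randic R e = 11%:R / 3%:R <-> is_complete e).
Proof.
move=> simple con q_max; have [_ irr] := simple.
have deg_gt0 := connected_deg_gt0 con (isT : (1 < 12)%N).
have deg_range u : (1 : R) <= (deg e u)%:R <= (11 : R).
  by rewrite ler1n deg_gt0 ler_nat (deg_le_pred u irr).
have gap u v := K12_gap (deg_range u) (deg_range v).
have D_ge0 : 0 <= deg_sum R e by apply: sumr_ge0 => u _; apply: ler0n.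
have C_gt0 : 0 < 11%:R / 3%:R :> R by rewrite divr_gt0 ?ltr0n.
have L_gt0 : 0 < 6 / 121 * deg_sum R e / 2 + 5 / 22 * 12%:R :> R by lra.
have CL : 11%:R / 3%:R * (6 / 121 * deg_sum R e / 2 + 5 / 22 * 12%:R) =
          signless_bound R e.
  by rewrite /signless_bound; field.
have [-> ->] :=
  randic_ratio_bound simple deg_gt0 q_max (fun u v _ => (gap u v).1) C_gt0 L_gt0 CL.
split=> //; split=> [[gap0 _] | complete].
  have deg11 u : deg e u = 11.
    have [w uw] := exists_adj (deg_gt0 u).
    have [/eqP du _] := (gap u w).2 (gap0 u w uw).
    by apply/eqP; rewrite -(eqr_nat R).
  by move=> x y xy; apply: (adj_of_deg_pred irr (deg11 x)); rewrite eq_sym.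
have deg11 := deg_complete irr complete.
split=> [u v _ | ]; first by rewrite !deg11; apply: K12_gap_eq0.
have -> : signless_bound R e = 2 * 11%:R.
  by rewrite /signless_bound (regular_deg_sum R deg11) /=; field.
exact: regular_eigenvalue.
Qed.

Lemma ratio_bound_order_ge13 (R : rcfType) (n : nat) (e : rel 'I_n) (q : R) :
  simple_graph e -> connected_graph e ->
  largest_eigenvalue (signless_laplacian R e) q -> (13 <= n)%N ->
  q / randic R e <= n%:R / Num.sqrt (n.-1)%:R /\
  (q / randic R e = n%:R / Num.sqrt (n.-1)%:R <-> is_star e).
Proof.
move=> simple con q_max n_ge13; set k := Num.sqrt _.
have n_gt0 : (0 < n)%N by apply: leq_trans n_ge13.
have deg_gt0 := connected_deg_gt0 con (leq_trans (isT : (1 < 13)%N) n_ge13).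
have n13 : 13 <= n%:R :> R by rewrite ler_nat.
have k_gt0 : 0 < k by rewrite sqrtr_gt0 natr_pred //; lra.
have k2 : k ^+ 2 = n%:R - 1 by rewrite sqr_sqrtr ?ler0n // natr_pred.
have deg_range u : (1 : R) <= (deg e u)%:R <= (n%:R - 1 : R).
  by apply/andP; split; [exact: deg_ge1R | exact: deg_lerR].
have gap u v := star_gap n13 k_gt0 k2 (deg_range u) (deg_range v).
have D_ge0 : 0 <= deg_sum R e by apply: sumr_ge0 => u _; apply: ler0n.
have C_gt0 : 0 < n%:R / k by rewrite divr_gt0 //; lra.
have [L_gt0 CL] := star_weights n13 k_gt0 k2 D_ge0.
have [-> ->] :=
  randic_ratio_bound simple deg_gt0 q_max (fun u v _ => (gap u v).1) C_gt0 L_gt0 CL.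
split=> //; split=> [[gap0 _] | star].
  apply: star_of_edge_degrees simple (leq_trans _ n_ge13) deg_gt0 _ => // u v uv.
  by case: ((gap u v).2 (gap0 u v uv)) => -[/eqP du /eqP dv]; [left | right];
    rewrite -?natr_pred // ?pnatr_eq1 ?eqr_nat in du dv; split; apply/eqP.
have [c star_e] := star; have [dc dx] := deg_star star_e.
have gap_star : randic_gap (2 / (n%:R * k)) (k * (n%:R - 2) / n%:R ^+ 2)
                  (deg e c)%:R (1%N)%:R = 0.
  by rewrite dc natr_pred //; apply: star_gap_eq0 => //; lra.
split=> [u v | ].
  rewrite star_e => /andP [uv /orP [] /eqP uv_c]; subst.
    by rewrite (dx v) 1?eq_sym.
  by rewrite randic_gapC (dx u).
have -> : signless_bound R e = n%:R.
  by rewrite /signless_bound (star_deg_sum R star); field; rewrite gt_eqF //; lra.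
exact: star_eigenvalue.
Qed.

Unset Implicit Arguments.

Theorem theorem1p2 (R : rcfType) (n : nat) (e : rel 'I_n) (q : R) :
  simple_graph e -> connected_graph e ->
  largest_eigenvalue (signless_laplacian R e) q ->
  (n = 12%N ->
     q / randic R e <= 11%:R / 3%:R /\
     (q / randic R e = 11%:R / 3%:R <-> is_complete e)) /\
  ((13 <= n)%N ->
     q / randic R e <= n%:R / Num.sqrt (n.-1)%:R /\
     (q / randic R e = n%:R / Num.sqrt (n.-1)%:R <-> is_star e)).
Proof.
move=> simple con q_max; split; last exact: ratio_bound_order_ge13.
by move=> n12; subst n; exact: ratio_bound_order12.
Qed.
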